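(* Let $c^{(k)}$ be an admissible control, $\rho^{(k)}$ the corresponding solution of the master equation and $\chi^{(k)}$ the solution of the adjoint system with control $c^{(k)}$. Let $c^{(k+1)}=(u^{(k+1)},n_1^{(k+1)},n_2^{(k+1)})$ be an admissible control and $\rho^{(k+1)}$ the solution of the master equation with control $c^{(k+1)}$ such that for every $t\in[0,T]$: $u^{(k+1)}(t)\in\arg\max_{|u|\le\mu}\mathcal K^u(\chi^{(k)}(t),\rho^{(k+1)}(t))\,u$ and $n_j^{(k+1)}(t)\in\arg\max_{n_j\in[0,n_{\max}]}\mathcal K^{n_j}(\chi^{(k)}(t),\rho^{(k+1)}(t))\,n_j$, $j=1,2$ (i.e. $u^{(k+1)}(t)=\pm\mu$ according to the sign of $\mathcal K^u$, $n_j^{(k+1)}(t)=0$ or $n_{\max}$ according to the sign of $\mathcal K^{n_j}$, arbitrary in the admissible range where the switching function vanishes). Then $\langle\mathcal K^c(\chi^{(k)}(t),\rho^{(k+1)}(t)),c^{(k+1)}(t)-c^{(k)}(t)\rangle\ge0$ for all $t\in[0,T]$ and $J_1(c^{(k+1)})\ge J_1(c^{(k)})$. Moreover $J_1(c^{(k+1)})>J_1(c^{(k)})$ if at least one of the sets $\{t: u^{(k+1)}(t)\ne u^{(k)}(t),\ \mathcal K^u(\chi^{(k)}(t),\rho^{(k+1)}(t))\ne0\}$, $\{t: n_j^{(k+1)}(t)\ne n_j^{(k)}(t),\ \mathcal K^{n_j}(\chi^{(k)}(t),\rho^{(k+1)}(t))\ne0\}$ ($j=1,2$) has positive Lebesgue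 measure.
   Context: Let $\sigma_x,\sigma_y,\sigma_z$ be the Pauli matrices, $\mathbb I_2,\mathbb I_4$ identity matrices, $\sigma^+=\begin{pmatrix}0&0\\1&0\end{pmatrix}$, $\sigma^-=\begin{pmatrix}0&1\\0&0\end{pmatrix}$, $\sigma_1^\pm=\sigma^\pm\otimes\mathbb I_2$, $\sigma_2^\pm=\mathbb I_2\otimes\sigma^\pm$, $W_1=\sigma_z\otimes\mathbb I_2$, $W_2=\mathbb I_2\otimes\sigma_z$. Fix parameters $\varepsilon,\omega_j,\Lambda_j,\Omega_j>0$ ($j=1,2$), $H_0=\frac{\omega_1}{2}W_1+\frac{\omega_2}{2}W_2$, and a Hermitian $4\times4$ matrix $V$ (in the paper $V=Q_1\otimes\mathbb I_2+\mathbb I_2\otimes Q_2$ or $V=Q_1\otimes Q_2$ with $Q_j=\sin\theta_j\cos\varphi_j\sigma_x+\sin\theta_j\sin\varphi_j\sigma_y+\cos\theta_j\sigma_z$). For $c=(u,n_1,n_2)\in\mathbb R^3$ let $H_c=H_0+\varepsilon\sum_{j=1}^2\Lambda_j n_jW_j+uV$ and $$\mathcal L^D_n(\rho)=\sum_{j=1}^2\Big[\Omega_j(n_j+1)\big(2\sigma_j^-\rho\sigma_j^+-\{\sigma_j^+\sigma_j^-,\rho\}\big)+\Omega_jn_j\big(2\sigma_j^+\rho\sigma_j^--\{\sigma_j^-\sigma_j^+,\rho\}\big)\Big],$$ $$\mathcal L^{D,\dagger}_n(\chi)=\sum_{j=1}^2\Big[\Omega_j(n_j+1)\big(2\sigma_j^+\chi\sigma_j^--\{\sigma_j^+\sigma_j^-,\chi\}\big)+\Omega_jn_j\big(2\sigma_j^-\chi\sigma_j^+-\{\sigma_j^-\sigma_j^+,\chi\}\big)\Big],$$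 where $\{A,B\}=AB+BA$, $[A,B]=AB-BA$. Fix $T>0$, $\mu,n_{\max}>0$, $Q=[-\mu,\mu]\times[0,n_{\max}]^2$; admissible controls are piecewise continuous $c=(u,n_1,n_2):[0,T]\to Q$. Fix density matrices $\rho_0,\rho_{\rm target}$ ($4\times 4$, positive semidefinite, trace one). The master equation is $\dot\rho(t)=-i[H_{c(t)},\rho(t)]+\varepsilon\mathcal L^D_{n(t)}(\rho(t))$, $\rho(0)=\rho_0$; the adjoint system is $\dot\chi(t)=-i[H_{c(t)},\chi(t)]-\varepsilon\mathcal L^{D,\dagger}_{n(t)}(\chi(t))$, $\chi(T)=\rho_{\rm target}$ (solved backward). For matrices, $\langle A,B\rangle={\rm Tr}(A^\dagger B)$. The objective is $J_1(c)={\rm Tr}(\rho(T)\rho_{\rm target})$ where $\rho$ solves the master equation with control $c$. The switching functions $\mathcal K^c=(\mathcal K^u,\mathcal K^{n_1},\mathcal K^{n_2})$ are the coefficients of $u,n_1,n_2$ in $\langle\chi,-i[H_c,\rho]+\varepsilon\mathcal L^D_n(\rho)\rangle$: $\mathcal K^u(\chi,\rho)=\langle\chi,-i[V,\rho]\rangle$, $\mathcal K^{n_j}(\chi,\rho)=\big\langle\chi,-i\varepsilon\Lambda_j[W_j,\rho]+\varepsilon\Omega_j\big(2\sigma_j^-\rho\sigma_j^++2\sigma_j^+\rho\sigma_j^--2\rho\big)\big\rangle$, $j=1,2$ (real for Hermitian $\chi,\rho$). *)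

From HB Require Import structures.
From mathcomp Require Import all_boot all_order all_algebra.
From mathcomp Require Import all_classical all_reals all_analysis.
From mathcomp Require Import complex.

Set Implicit Arguments.
Unset Strict Implicit.
Unset Printing Implicit Defensive.

Import Order.TTheory GRing.Theory Num.Theory.
Import numFieldNormedType.Exports.
Local Open Scope classical_set_scope.
Local Open Scope ring_scope.
Local Open Scope complex_scope.

Section QuantumControl.
Variable R : realType.
Local Notation C := R[i].
Local Notation M2 := 'M[C]_2.
Local Notation M4 := 'M[C]_4.

Definition sigx : M2 := \matrix_(i < 2, j < 2) (if i == j then 0 else 1).
Definition sigy : M2 := \matrix_(i < 2, j < 2)
  (if i == j then 0 else if (i == 0 :> nat) then - 'i else 'i).
Definition sigz : M2 := \matrix_(i < 2, j < 2)
  (if i == j then (if (i == 0 :> nat) then 1 else -1) else 0).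
Definition sigp : M2 := \matrix_(i < 2, j < 2)
  (if ((i == 1 :> nat) && (j == 0 :> nat)) then 1 else 0).
Definition sigm : M2 := \matrix_(i < 2, j < 2)
  (if ((i == 0 :> nat) && (j == 1 :> nat)) then 1 else 0).
Definition I2 : M2 := 1%:M.

(* Kronecker product of 2x2 matrices, standard ordering:
   (A (x) B)_{2 i1 + i2, 2 j1 + j2} = A_{i1 j1} B_{i2 j2}. *)
Definition kron (A B : M2) : M4 := \matrix_(i < 4, j < 4)
  (A (inord (i %/ 2)) (inord (j %/ 2)) * B (inord (i %% 2)) (inord (j %% 2))).

Definition sig1p : M4 := kron sigp I2.
Definition sig1m : M4 := kron sigm I2.
Definition sig2p : M4 := kron I2 sigp.
Definition sig2m : M4 := kron I2 sigm.
Definition W1 : M4 := kron sigz I2.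
Definition W2 : M4 := kron I2 sigz.

Definition dag (A : M4) : M4 := map_mx Num.conj (A^T).
Definition comm (A B : M4) : M4 := A *m B - B *m A.
Definition acomm (A B : M4) : M4 := A *m B + B *m A.
Definition ip (A B : M4) : C := \tr (dag A *m B).

Definition hermitian (A : M4) : Prop := dag A = A.
(* density matrix: positive semidefinite (x^* A x >= 0, i.e. real and
   nonnegative, for all x) and trace one *)
Definition dag_cv (x : 'cV[C]_4) : 'rV[C]_4 := map_mx Num.conj (x^T).
Definition density (A : M4) : Prop :=
  (forall x : 'cV[C]_4, 0 <= ((dag_cv x) *m A *m x) 0 0) /\ \tr A = 1.

Record params := Params {
  eps : R; om1 : R; om2 : R; La1 : R; La2 : R; Om1 : R; Om2 : R;
  Vop : M4 }.

Definition params_ok (P : params) : Prop :=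
  [/\ 0 < eps P, 0 < om1 P, 0 < om2 P, 0 < La1 P & 0 < La2 P] /\
  [/\ 0 < Om1 P, 0 < Om2 P & hermitian (Vop P)].

Definition H0 (P : params) : M4 :=
  ((om1 P / 2)%:C) *: W1 + ((om2 P / 2)%:C) *: W2.

Definition Hc (P : params) (u n1 n2 : R) : M4 :=
  H0 P + ((eps P * La1 P * n1)%:C) *: W1 + ((eps P * La2 P * n2)%:C) *: W2
       + (u%:C) *: Vop P.

Definition LD (P : params) (n1 n2 : R) (rho : M4) : M4 :=
  ((Om1 P * (n1 + 1))%:C) *: (2%:R *: (sig1m *m rho *m sig1p)
                               - acomm (sig1p *m sig1m) rho)
+ ((Om1 P * n1)%:C) *: (2%:R *: (sig1p *m rho *m sig1m)
                               - acomm (sig1m *m sig1p) rho)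
+ ((Om2 P * (n2 + 1))%:C) *: (2%:R *: (sig2m *m rho *m sig2p)
                               - acomm (sig2p *m sig2m) rho)
+ ((Om2 P * n2)%:C) *: (2%:R *: (sig2p *m rho *m sig2m)
                               - acomm (sig2m *m sig2p) rho).

Definition LDadj (P : params) (n1 n2 : R) (chi : M4) : M4 :=
  ((Om1 P * (n1 + 1))%:C) *: (2%:R *: (sig1p *m chi *m sig1m)
                               - acomm (sig1p *m sig1m) chi)
+ ((Om1 P * n1)%:C) *: (2%:R *: (sig1m *m chi *m sig1p)
                               - acomm (sig1m *m sig1p) chi)
+ ((Om2 P * (n2 + 1))%:C) *: (2%:R *: (sig2p *m chi *m sig2m)
                               - acomm (sig2p *m sig2m) chi)
+ ((Om2 P * n2)%:C) *: (2%:R *: (sig2m *m chi *m sig2p)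
                               - acomm (sig2m *m sig2p) chi).

Definition master_rhs (P : params) (u n1 n2 : R) (rho : M4) : M4 :=
  (- 'i) *: comm (Hc P u n1 n2) rho + ((eps P)%:C) *: LD P n1 n2 rho.
Definition adjoint_rhs (P : params) (u n1 n2 : R) (chi : M4) : M4 :=
  (- 'i) *: comm (Hc P u n1 n2) chi - ((eps P)%:C) *: LDadj P n1 n2 chi.

(* switching functions (the real numbers <chi, .>; real for Hermitian
   arguments, we take the real part) *)
Definition Ku (P : params) (chi rho : M4) : R :=
  complex.Re (ip chi ((- 'i) *: comm (Vop P) rho)).
Definition Kn1 (P : params) (chi rho : M4) : R :=
  complex.Re (ip chi ((- 'i * (eps P * La1 P)%:C) *: comm W1 rho
     + ((eps P * Om1 P)%:C) *: (2%:R *: (sig1m *m rho *m sig1p)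
                               + 2%:R *: (sig1p *m rho *m sig1m)
                               - 2%:R *: rho))).
Definition Kn2 (P : params) (chi rho : M4) : R :=
  complex.Re (ip chi ((- 'i * (eps P * La2 P)%:C) *: comm W2 rho
     + ((eps P * Om2 P)%:C) *: (2%:R *: (sig2m *m rho *m sig2p)
                               + 2%:R *: (sig2p *m rho *m sig2m)
                               - 2%:R *: rho))).

Definition piecewise_continuous (T : R) (f : R -> R) : Prop :=
  exists s : seq R,
    (forall t, 0 < t < T -> t \notin s -> {for t, continuous f}) /\
    (forall t, 0 < t <= T -> [cvg f @ t^'- in R]) /\
    (forall t, 0 <= t < T -> [cvg f @ t^'+ in R]).

Definition admissible (T mu nmax : R) (u n1 n2 : R -> R) : Prop :=
  [/\ piecewise_continuous T u, piecewise_continuous T n1,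
      piecewise_continuous T n2 &
      forall t, 0 <= t <= T ->
        [/\ -mu <= u t <= mu, 0 <= n1 t <= nmax & 0 <= n2 t <= nmax]].

(* X : R -> M4 solves X' = G(t) on [0,T] (entrywise, real and imaginary
   parts): X is continuous on [0,T] and differentiable with X'(t) = G t at
   every t in ]0,T[ except finitely many (the switching times). *)
Definition solves_on (T : R) (G : R -> M4) (X : R -> M4) : Prop :=
  (forall i j : 'I_4,
     {within `[0, T], continuous (fun t => complex.Re (X t i j))} /\
     {within `[0, T], continuous (fun t => complex.Im (X t i j))}) /\
  exists s : seq R, forall t, 0 < t < T -> t \notin s ->
    forall i j : 'I_4,
      is_derive t 1 (fun x => complex.Re (X x i j)) (complex.Re (G t i j)) /\
      is_derive t 1 (fun x => complex.Im (X x i j)) (complex.Im (G t i j)).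

Definition master_sol (P : params) (T : R) (u n1 n2 : R -> R)
  (rho0 : M4) (rho : R -> M4) : Prop :=
  rho 0 = rho0 /\
  solves_on T (fun t => master_rhs P (u t) (n1 t) (n2 t) (rho t)) rho.

Definition adjoint_sol (P : params) (T : R) (u n1 n2 : R -> R)
  (target : M4) (chi : R -> M4) : Prop :=
  chi T = target /\
  solves_on T (fun t => adjoint_rhs P (u t) (n1 t) (n2 t) (chi t)) chi.

(* objective J_1 = Tr(rho(T) rho_target), for the solution rho of the
   master equation (real, we take the real part) *)
Definition J1 (T : R) (target : M4) (rho : R -> M4) : R :=
  complex.Re (\tr (rho T *m target)).

Definition is_argmax (lo hi : R) (g : R -> R) (x : R) : Prop :=
  lo <= x <= hi /\ forall y, lo <= y <= hi -> g y <= g x.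

Definition pos_lebesgue (A : set R) : Prop := (0 < lebesgue_measure A)%E.

End QuantumControl.

(* The quantity driving the argument is the pairing
   F(t) = Re <chi_k(t), rho_{k+1}(t)>.  The adjoint generator is minus the
   Hilbert-Schmidt adjoint of the master generator, and the master generator is
   affine in the control with the switching functions as coefficients; hence
   F' = <K(chi_k, rho_{k+1}), c_{k+1} - c_k>, which is nonnegative by the choice
   of c_{k+1}.  The same computation with rho_k shows that Re <chi_k, rho_k> is
   conserved, so J_1(c_k) = Re <chi_k(0), rho_0> = F(0) while J_1(c_{k+1}) = F(T).
   If F(0) = F(T), the nondecreasing F is constant, so F' vanishes off finitely
   many points, and each set in the strictness hypothesis (where F' > 0) is finite,
   hence null. *)

From Pilot Require Import Defs.
From HB Require Import structures.
From mathcomp Require Import all_boot all_order all_algebra.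
From mathcomp Require Import all_classical all_reals all_analysis.
From mathcomp Require Import complex.
From mathcomp Require Import ring lra.

Set Implicit Arguments.
Unset Strict Implicit.
Unset Printing Implicit Defensive.

Import Order.TTheory GRing.Theory Num.Theory.
Import numFieldNormedType.Exports.
Local Open Scope classical_set_scope.
Local Open Scope ring_scope.

Section RealAnalysis.
Variable R : realType.

Lemma subset_itvcc (a b c d : R) : a <= c -> d <= b -> `[c, d] `<=` `[a, b].
Proof. by move=> ac db; apply: subset_itv; rewrite bnd_simp. Qed.

Lemma piecewise_derive_ge0_le (f df : R -> R) (s : seq R) (a b : R) :
  a <= b -> {within `[a, b], continuous f} ->
  (forall t, a < t < b -> t \notin s -> is_derive t 1 f (df t) /\ 0 <= df t) ->
  f a <= f b.
Proof.
elim: s a b => [|x s IH] a b ab fc fd.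
  move: ab; rewrite le_eqVlt => /orP[/eqP ->//|ab].
  have [c /[!in_itv]/= cab fab] : exists2 c, c \in `]a, b[ & f b - f a = df c * (b - a).
    by apply: MVT => // y /[!in_itv]/= /fd[].
  rewrite -subr_ge0 fab; apply: mulr_ge0; first by have [] := fd c cab isT.
  by rewrite subr_ge0 ltW.
have fd' t : a < t < b -> t != x -> t \notin s -> is_derive t 1 f (df t) /\ 0 <= df t.
  by move=> tab tx ts; apply: fd; rewrite // in_cons negb_or tx.
have [/andP[ax xb]|xab] := boolP (a < x < b); last first.
  apply: IH => // t tab ts; apply: fd' => //.
  by apply: contraNneq xab => <-.
apply: (@le_trans _ _ (f x)); apply: IH.
- exact: ltW.
- by apply: continuous_subspaceW fc; apply: subset_itvcc => //; exact: ltW.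
- move=> t /andP[a_t tx]; apply: fd'; first by rewrite a_t (lt_trans tx).
  by rewrite lt_eqF.
- exact: ltW.
- by apply: continuous_subspaceW fc; apply: subset_itvcc => //; exact: ltW.
- move=> t /andP[xt tb]; apply: fd'; first by rewrite tb (lt_trans ax).
  by rewrite gt_eqF.
Qed.

Lemma piecewise_derive0_eq (f : R -> R) (s : seq R) (a b : R) :
  a <= b -> {within `[a, b], continuous f} ->
  (forall t, a < t < b -> t \notin s -> is_derive t 1 f 0) -> f a = f b.
Proof.
move=> ab fc fd; apply/eqP; rewrite eq_le.
rewrite (@piecewise_derive_ge0_le f (fun=> 0) s) //=; last first.
  by move=> t tab ts; split => //; exact: fd.
rewrite -lerN2 (@piecewise_derive_ge0_le (fun t => - f t) (fun=> 0) s) //.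
  by move=> x; apply: continuousN; exact: fc.
by move=> t tab ts; split => //; rewrite -oppr0; exact: is_deriveN (fd t tab ts).
Qed.

Lemma is_derive_cst_on_itv (f : R -> R) (c d t a b : R) : a < t < b ->
  (forall x, a < x < b -> f x = c) -> is_derive t 1 f d -> d = 0.
Proof.
move=> tab fc fd.
have fcst : \forall x \near t, f x = cst c x.
  by apply: filterS (near_in_itvoo tab) => x /[!in_itv]/= /fc.
by case: (near_eq_is_derive fcst fd) => _ <-; rewrite derive_cst.
Qed.

Lemma piecewise_derive_ge0_eq_derive0 (f df : R -> R) (s : seq R) (a b : R) :
  {within `[a, b], continuous f} ->
  (forall t, a < t < b -> t \notin s -> is_derive t 1 f (df t) /\ 0 <= df t) ->
  f a = f b -> forall t, a < t < b -> t \notin s -> df t = 0.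
Proof.
move=> fc fd fab t tab ts.
have mono x y : a <= x -> x <= y -> y <= b -> f x <= f y.
  move=> ax xy yb; apply: (@piecewise_derive_ge0_le f df s) => //.
    by apply: continuous_subspaceW fc; apply: subset_itvcc.
  move=> z /andP[xz zy]; apply: fd.
  by rewrite (le_lt_trans ax xz) (lt_le_trans zy yb).
have fcst x : a < x < b -> f x = f a.
  move=> /andP[/ltW ax /ltW xb]; apply/eqP.
  by rewrite eq_le (mono a x) // andbT fab mono.
by have [fdt _] := fd t tab ts; exact: is_derive_cst_on_itv tab fcst fdt.
Qed.

Lemma finite_not_pos_lebesgue (A : set R) (s : seq R) :
  A `<=` [set` s] -> ~ pos_lebesgue A.
Proof.
move=> As; rewrite /pos_lebesgue countable_lebesgue_measure0 ?ltxx //.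
exact: sub_countable (subset_card_le As) (finite_set_countable (finite_seq s)).
Qed.

Lemma piecewise_derive_ge0_lt (f df : R -> R) (s : seq R) (a b : R) (A : set R) :
  a <= b -> {within `[a, b], continuous f} ->
  (forall t, a < t < b -> t \notin s -> is_derive t 1 f (df t) /\ 0 <= df t) ->
  (forall t, A t -> a <= t <= b /\ 0 < df t) -> pos_lebesgue A -> f a < f b.
Proof.
move=> ab fc fd Apos posA; rewrite lt_def (piecewise_derive_ge0_le ab fc fd) andbT.
apply/eqP => fba; have df0 := piecewise_derive_ge0_eq_derive0 fc fd (esym fba).
apply: (finite_not_pos_lebesgue (s := a :: b :: s) _ posA) => t /Apos[/andP[a_t tb] dft].
rewrite /= !in_cons; have [->|ta] //= := eqVneq t a; have [->|tb'] //= := eqVneq t b.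
apply: contraTT dft => ts; suff -> : df t = 0 by rewrite ltxx.
by apply: df0; rewrite // !lt_neqAle eq_sym ta a_t tb' tb.
Qed.

Definition improves (K x y : R) : Prop :=
  0 <= K * (x - y) /\ (x != y -> K != 0 -> 0 < K * (x - y)).

Lemma is_argmax_improves (lo hi K x y : R) : is_argmax lo hi (fun v => K * v) x ->
  lo <= y <= hi -> improves K x y.
Proof.
move=> [_ x_max] y_lohi; have Kxy : 0 <= K * (x - y) by rewrite mulrBr subr_ge0 x_max.
by split=> // xy K0; rewrite lt_def Kxy andbT mulf_neq0 // subr_eq0.
Qed.

Lemma improves3 (K1 K2 K3 x1 x2 x3 y1 y2 y3 : R) :
  improves K1 x1 y1 -> improves K2 x2 y2 -> improves K3 x3 y3 ->
  let g := K1 * (x1 - y1) + K2 * (x2 - y2) + K3 * (x3 - y3) in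
  0 <= g /\
  ((x1 != y1 /\ K1 != 0) \/ (x2 != y2 /\ K2 != 0) \/ (x3 != y3 /\ K3 != 0) -> 0 < g).
Proof.
move=> [+ s1] [+ s2] [+ s3] /=.
move: (K1 * _) (K2 * _) (K3 * _) s1 s2 s3 => a1 a2 a3 s1 s2 s3 g1 g2 g3.
split; first lra.
by case=> [[/s1 h /h]|[[/s2 h /h]|[/s3 h /h]]]; lra.
Qed.

End RealAnalysis.

Section Model.
Variable R : realType.
Local Notation C := R[i].
Local Notation M4 := 'M[C]_4.
Implicit Types (A B X Y : M4) (c : C).

Lemma dagD A B : dag (A + B) = dag A + dag B.
Proof. by rewrite /dag linearD map_mxD. Qed.

Lemma dagZ c A : dag (c *: A) = Num.conj c *: dag A.
Proof. by rewrite /dag linearZ map_mxZ. Qed.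

Lemma dagM A B : dag (A *m B) = dag B *m dag A.
Proof. by rewrite /dag trmx_mul map_mxM. Qed.

Lemma dagK A : dag (dag A) = A.
Proof. by apply/matrixP => i j; rewrite !mxE conjCK. Qed.

Lemma ipDr X A B : ip X (A + B) = ip X A + ip X B.
Proof. by rewrite /ip mulmxDr mxtraceD. Qed.

Lemma ipBl A B X : ip (A - B) X = ip A X - ip B X.
Proof. by rewrite /ip /dag linearB map_mxB mulmxBl linearB. Qed.

Lemma ipBr X A B : ip X (A - B) = ip X A - ip X B.
Proof. by rewrite /ip mulmxBr linearB. Qed.

Lemma ipDl A B X : ip (A + B) X = ip A X + ip B X.
Proof. by rewrite /ip dagD mulmxDl mxtraceD. Qed.

Lemma ipZl c A X : ip (c *: A) X = Num.conj c * ip A X.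
Proof. by rewrite /ip dagZ -scalemxAl mxtraceZ. Qed.

Lemma ipZr X c A : ip X (c *: A) = c * ip X A.
Proof. by rewrite /ip -scalemxAr mxtraceZ. Qed.

Lemma ipMl Y A X : ip (Y *m A) X = ip A (dag Y *m X).
Proof. by rewrite /ip dagM mulmxA. Qed.

Lemma ipMr Y A X : ip (A *m Y) X = ip A (X *m dag Y).
Proof. by rewrite /ip dagM -mulmxA mxtrace_mulC mulmxA. Qed.

Lemma inord_eq2 (a b : nat) : (a < 2)%N -> (b < 2)%N ->
  ((inord a : 'I_2) == inord b) = (a == b).
Proof. by move=> ha hb; rewrite -(inj_eq val_inj) /= !inordK. Qed.

Ltac entrywise :=
  apply/matrixP; do 2 (case=> [[|[|[|[|//]]]] ?]);
  rewrite !mxE ?big_ord_recr ?big_ord0 /= ?mxE /= ?inordK //= ?inord_eq2 //= ?eqxx /=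
    ?mul1r ?mulr0 ?mul0r ?mulr1 ?add0r ?addr0 ?conjC0 ?conjC1 ?rmorphN1 //.

Lemma dag_sig1p : dag (sig1p R) = sig1m R.
Proof. rewrite /dag /sig1p /sig1m /kron; entrywise. Qed.

Lemma dag_sig2p : dag (sig2p R) = sig2m R.
Proof. rewrite /dag /sig2p /sig2m /kron; entrywise. Qed.

Lemma dag_W1 : dag (W1 R) = W1 R.
Proof. rewrite /dag /W1 /kron; entrywise. Qed.

Lemma dag_W2 : dag (W2 R) = W2 R.
Proof. rewrite /dag /W2 /kron; entrywise. Qed.

Lemma sig1_acomm : sig1p R *m sig1m R + sig1m R *m sig1p R = 1.
Proof. rewrite /sig1p /sig1m /kron; entrywise. Qed.

Lemma sig2_acomm : sig2p R *m sig2m R + sig2m R *m sig2p R = 1.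
Proof. rewrite /sig2p /sig2m /kron; entrywise. Qed.

Lemma ip_sandwich X A Y B : ip (X *m A *m Y) B = ip A (dag X *m B *m dag Y).
Proof. by rewrite ipMr ipMl mulmxA. Qed.

Lemma ip_acomm S A B : ip (acomm S A) B = ip A (acomm (dag S) B).
Proof. by rewrite /acomm ipDl ipDr ipMl ipMr. Qed.

Lemma conj_realc (x : R) : Num.conj (x%:C%C : C) = x%:C%C.
Proof. exact: conjc_real. Qed.

Lemma ip_dissipator_term (a : R) (p m X Y : M4) : dag p = m ->
  ip (a%:C%C *: (2%:R *: (p *m X *m m) - acomm (p *m m) X)) Y =
  ip X (a%:C%C *: (2%:R *: (m *m Y *m p) - acomm (p *m m) Y)).
Proof.
move=> pm; have mp : dag m = p by rewrite -pm dagK.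
rewrite ipZl ipZr conj_realc ipBl ipBr ipZl ipZr rmorph_nat.
by rewrite ip_sandwich ip_acomm dagM pm mp.
Qed.

Lemma ip_LDadj (P : params R) (n1 n2 : R) X Y :
  ip (LDadj P n1 n2 X) Y = ip X (LD P n1 n2 Y).
Proof.
have dag_sig1m : dag (sig1m R) = sig1p R by rewrite -dag_sig1p dagK.
have dag_sig2m : dag (sig2m R) = sig2p R by rewrite -dag_sig2p dagK.
rewrite /LDadj /LD !ipDl !ipDr.
congr (_ + _ + _ + _); apply: ip_dissipator_term;
  by [exact: dag_sig1p | exact: dag_sig1m | exact: dag_sig2p | exact: dag_sig2m].
Qed.

Lemma ip_comm_hermitian (H X Y : M4) : dag H = H ->
  ip ((- 'i) *: comm H X) Y + ip X ((- 'i) *: comm H Y) = 0.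
Proof.
move=> hH; rewrite /comm ipZl ipZr ipBl ipBr ipMl ipMr hH.
have -> : Num.conj (- 'i : C) = 'i.
  by rewrite -complexiE rmorphN; apply/eqP; rewrite eq_complex /= oppr0 opprK !eqxx.
ring.
Qed.

Lemma dag_Hc (P : params R) (u n1 n2 : R) : Defs.hermitian (Vop P) ->
  dag (Hc P u n1 n2) = Hc P u n1 n2.
Proof. by move=> hV; rewrite /Hc /H0 !dagD !dagZ !conj_realc dag_W1 dag_W2 hV. Qed.

Lemma ip_adjoint_rhs (P : params R) (u n1 n2 : R) X Y : Defs.hermitian (Vop P) ->
  ip (adjoint_rhs P u n1 n2 X) Y = - ip X (master_rhs P u n1 n2 Y).
Proof.
move=> hV; apply/eqP; rewrite -addr_eq0 /adjoint_rhs /master_rhs ipBl ipDr.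
rewrite ipZl ipZr conj_realc ip_LDadj addrACA.
by rewrite ip_comm_hermitian ?dag_Hc // add0r addNr.
Qed.

(* [Ku P X Y] is [Re (ip X (ctrl_u P Y))] by definition; likewise for [Kn1], [Kn2]. *)
Definition ctrl_u (P : params R) Y : M4 := (- 'i) *: comm (Vop P) Y.

Definition ctrl_n1 (P : params R) Y : M4 :=
  (- 'i * (eps P * La1 P)%:C%C) *: comm (W1 R) Y
  + (eps P * Om1 P)%:C%C *: (2%:R *: (sig1m R *m Y *m sig1p R)
                             + 2%:R *: (sig1p R *m Y *m sig1m R) - 2%:R *: Y).

Definition ctrl_n2 (P : params R) Y : M4 :=
  (- 'i * (eps P * La2 P)%:C%C) *: comm (W2 R) Y
  + (eps P * Om2 P)%:C%C *: (2%:R *: (sig2m R *m Y *m sig2p R)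
                             + 2%:R *: (sig2p R *m Y *m sig2m R) - 2%:R *: Y).

Lemma commDl A B X : comm (A + B) X = comm A X + comm B X.
Proof. by rewrite /comm mulmxDl mulmxDr opprD addrACA. Qed.

Lemma commZl (c : C) A X : comm (c *: A) X = c *: comm A X.
Proof. by rewrite /comm -scalemxAl -scalemxAr scalerBr. Qed.

Lemma acomm_swap {p m : M4} : p *m m + m *m p = 1 -> forall Y,
  acomm (m *m p) Y = 2%:R *: Y - acomm (p *m m) Y.
Proof.
move=> h Y; apply/eqP; rewrite eq_sym subr_eq /acomm.
by rewrite addrACA -mulmxDl -mulmxDr [m *m p + _]addrC h mul1mx mulmx1 scaler_nat mulr2n.
Qed.

(* Stated over an abstract module: on the concrete matrices of [Defs], rewriting
   compares the many similar matrix expressions by conversion, which unfolds them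
   down to their entries and is prohibitively slow. For the same reason the
   lemmas below avoid rewriting with closed matrix expressions. *)
Lemma linear_affine_in_control (V : lmodType C) (f : V -> C)
    (fD : {morph f : a b / a + b}) (fZ : forall c a, f (c *: a) = c * f a)
    (im : C) (e l1 l2 w1 w2 u n1 n2 : R) (cH c1 c2 cV a1 b1 a2 b2 q1 q2 Y : V) :
  let rhs u n1 n2 :=
    - im *: (cH + (e * l1 * n1)%:C%C *: c1 + (e * l2 * n2)%:C%C *: c2 + u%:C%C *: cV)
    + e%:C%C *: ((w1 * (n1 + 1))%:C%C *: (2%:R *: a1 - q1)
                 + (w1 * n1)%:C%C *: (2%:R *: b1 - (2%:R *: Y - q1))
                 + (w2 * (n2 + 1))%:C%C *: (2%:R *: a2 - q2)
                 + (w2 * n2)%:C%C *: (2%:R *: b2 - (2%:R *: Y - q2))) in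
  f (rhs u n1 n2) = f (rhs 0 0 0)
    + u%:C%C * f (- im *: cV)
    + n1%:C%C * f ((- im * (e * l1)%:C%C) *: c1
                   + (e * w1)%:C%C *: (2%:R *: a1 + 2%:R *: b1 - 2%:R *: Y))
    + n2%:C%C * f ((- im * (e * l2)%:C%C) *: c2
                   + (e * w2)%:C%C *: (2%:R *: a2 + 2%:R *: b2 - 2%:R *: Y)).
Proof.
have fN a : f (- a) = - f a by rewrite -scaleN1r fZ mulN1r.
rewrite /= !(fD, fN, fZ) !(rmorphM, rmorphD, rmorph0, rmorph1).
ring.
Qed.

Lemma ip_master_rhs_affine (P : params R) (u n1 n2 : R) X Y :
  ip X (master_rhs P u n1 n2 Y) = ip X (master_rhs P 0 0 0 Y)
    + u%:C%C * ip X (ctrl_u P Y) + n1%:C%C * ip X (ctrl_n1 P Y) + n2%:C%C * ip X (ctrl_n2 P Y).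
Proof.
rewrite /master_rhs /Hc /LD /ctrl_u /ctrl_n1 /ctrl_n2; move: (H0 P) => H.
rewrite !commDl !commZl !(acomm_swap sig1_acomm) !(acomm_swap sig2_acomm).
move: (comm H Y) (comm (W1 R) Y) (comm (W2 R) Y) (comm (Vop P) Y)
  (sig1m R *m Y *m sig1p R) (sig1p R *m Y *m sig1m R)
  (sig2m R *m Y *m sig2p R) (sig2p R *m Y *m sig2m R)
  (acomm (sig1p R *m sig1m R) Y) (acomm (sig2p R *m sig2m R) Y)
  => cH c1 c2 cV a1 b1 a2 b2 q1 q2.
have /= expand := linear_affine_in_control (ipDr X) (ipZr X) 'i (eps P) (La1 P)
  (La2 P) (Om1 P) (Om2 P) u n1 n2 cH c1 c2 cV a1 b1 a2 b2 q1 q2 Y.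
exact: expand.
Qed.

Lemma ReD (a b : C) : complex.Re (a + b) = complex.Re a + complex.Re b.
Proof. by case: a => ? ?; case: b. Qed.

Lemma Re_affineB (a a' z0 zu z1 z2 : C) (u n1 n2 u' n1' n2' : R) :
  a' = z0 + u'%:C%C * zu + n1'%:C%C * z1 + n2'%:C%C * z2 ->
  a = z0 + u%:C%C * zu + n1%:C%C * z1 + n2%:C%C * z2 ->
  complex.Re a' - complex.Re a =
  complex.Re zu * (u' - u) + complex.Re z1 * (n1' - n1) + complex.Re z2 * (n2' - n2).
Proof.
move=> -> ->; case: z0 => ? ?; case: zu => ? ?; case: z1 => ? ?; case: z2 => ? ? /=.
ring.
Qed.

Lemma Re_master_rhsB (P : params R) (u n1 n2 u' n1' n2' : R) (X Y : M4) :
  complex.Re (ip X (master_rhs P u' n1' n2' Y))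
  - complex.Re (ip X (master_rhs P u n1 n2 Y))
  = Ku P X Y * (u' - u) + Kn1 P X Y * (n1' - n1) + Kn2 P X Y * (n2' - n2).
Proof.
exact: Re_affineB (ip_master_rhs_affine P u' n1' n2' X Y)
                  (ip_master_rhs_affine P u n1 n2 X Y).
Qed.

Lemma dag_cvD (x y : 'cV[C]_4) : dag_cv (x + y) = dag_cv x + dag_cv y.
Proof. by apply/matrixP => a b; rewrite !mxE rmorphD. Qed.

Lemma dag_cvZ (c : C) (x : 'cV[C]_4) : dag_cv (c *: x) = Num.conj c *: dag_cv x.
Proof. by apply/matrixP => a b; rewrite !mxE rmorphM. Qed.

Lemma dag_cv_delta (j : 'I_4) : dag_cv (delta_mx j 0 : 'cV[C]_4) = delta_mx 0 j.
Proof. by rewrite /dag_cv trmx_delta map_delta_mx. Qed.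

Lemma delta_mx_form (A : M4) (j k : 'I_4) :
  ((delta_mx 0 j : 'rV[C]_4) *m A *m (delta_mx k 0 : 'cV[C]_4)) 0 0 = A j k.
Proof. by rewrite -rowE -colE !mxE. Qed.

Lemma quadratic_form_delta (A : M4) (j k : 'I_4) (c : C) :
  let x : 'cV[C]_4 := delta_mx j 0 + c *: delta_mx k 0 in
  (dag_cv x *m A *m x) 0 0
  = A j j + c * A j k + Num.conj c * A k j + Num.conj c * c * A k k.
Proof.
rewrite /= dag_cvD dag_cvZ !dag_cv_delta.
rewrite !(mulmxDl, mulmxDr) -!scalemxAl -!scalemxAr.
have entryD (M N : 'M[C]_1) : (M + N) 0 0 = M 0 0 + N 0 0 by rewrite mxE.
have entryZ (c' : C) (M : 'M[C]_1) : (c' *: M) 0 0 = c' * M 0 0 by rewrite mxE.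
by rewrite !entryD !entryZ !delta_mx_form; ring.
Qed.

Lemma density_hermitian (A : M4) : density A -> dag A = A.
Proof.
move=> [A_psd _].
have Im0 x : complex.Im ((dag_cv x *m A *m x) 0 0) = 0.
  by have := A_psd x; rewrite lecE /= => /andP[/eqP <- _].
have diag_real j : complex.Im (A j j) = 0.
  by have := Im0 (delta_mx j 0 + 0 *: delta_mx j 0); rewrite quadratic_form_delta
    rmorph0 !mul0r !addr0.
apply/matrixP => j k; rewrite /dag !mxE.
have := Im0 (delta_mx j 0 + 1 *: delta_mx k 0); rewrite quadratic_form_delta rmorph1 !mul1r.
have := Im0 (delta_mx j 0 + 'i%C *: delta_mx k 0); rewrite quadratic_form_delta.
move: (diag_real j) (diag_real k).
case: (A j j) (A j k) (A k j) (A k k) => [a1 b1] [a2 b2] [a3 b3] [a4 b4] /= -> -> h2 h1.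
by apply/eqP; rewrite eq_complex /=; apply/andP; split; apply/eqP; lra.
Qed.

Definition mx_is_derive (t : R) (X : R -> M4) (dX : M4) : Prop :=
  forall i j : 'I_4,
    is_derive t 1 (fun x => complex.Re (X x i j)) (complex.Re (dX i j)) /\
    is_derive t 1 (fun x => complex.Im (X x i j)) (complex.Im (dX i j)).

Definition mx_continuous_in (A : set R) (X : R -> M4) : Prop :=
  forall i j : 'I_4,
    {within A, continuous (fun t => complex.Re (X t i j))} /\
    {within A, continuous (fun t => complex.Im (X t i j))}.

Lemma Re_sum (I : Type) (r : seq I) (P : pred I) (F : I -> C) :
  complex.Re (\sum_(i <- r | P i) F i) = \sum_(i <- r | P i) complex.Re (F i).
Proof. by elim/big_rec2: _ => //= i x y _ <-; rewrite ReD. Qed.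

Lemma Re_ip (A B : M4) : complex.Re (ip A B) = \sum_(i < 4) \sum_(k < 4)
  (complex.Re (A k i) * complex.Re (B k i) + complex.Im (A k i) * complex.Im (B k i)).
Proof.
rewrite /ip /mxtrace Re_sum; apply: eq_bigr => i _.
rewrite mxE Re_sum; apply: eq_bigr => k _; rewrite /dag !mxE.
by case: (A k i) => a b; case: (B k i) => c d /=; ring.
Qed.

Lemma is_derive_Re_ip (X Y : R -> M4) (dX dY : M4) (t : R) :
  mx_is_derive t X dX -> mx_is_derive t Y dY ->
  is_derive t 1 (fun x => complex.Re (ip (X x) (Y x)))
     (complex.Re (ip dX (Y t)) + complex.Re (ip (X t) dY)).
Proof.
move=> hX hY; under [fun x => _]funext => x do rewrite Re_ip.
rewrite !Re_ip -big_split /= -fct_sumE; apply: is_derive_sum => i.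
rewrite -big_split /= -fct_sumE; apply: is_derive_sum => k.
have [hXr hXi] := hX k i; have [hYr hYi] := hY k i.
refine (is_derive_eq (is_deriveD (is_deriveM hXr hYr) (is_deriveM hXi hYi)) _).
by rewrite /GRing.scale /=; ring.
Qed.

Lemma continuous_Re_ip (A : set R) (X Y : R -> M4) :
  mx_continuous_in A X -> mx_continuous_in A Y ->
  {within A, continuous (fun x => complex.Re (ip (X x) (Y x)))}.
Proof.
move=> hX hY; under [fun x => _]funext => x do rewrite Re_ip.
move=> x; apply: cvg_big => [|i _]; first exact: add_continuous.
apply: cvg_big => [|k _]; first exact: add_continuous.
have [hXr hXi] := hX k i; have [hYr hYi] := hY k i.
by apply: cvgD; apply: cvgM; [exact: hXr|exact: hYr|exact: hXi|exact: hYi].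
Qed.

Lemma ReN (z : C) : complex.Re (- z) = - complex.Re z.
Proof. by case: z. Qed.

Lemma is_derive_pairing (P : params R) (T : R) (u n1 n2 u' n1' n2' : R -> R)
    (target rho0 : M4) (chi rho : R -> M4) :
  Defs.hermitian (Vop P) ->
  adjoint_sol P T u n1 n2 target chi -> master_sol P T u' n1' n2' rho0 rho ->
  {within `[0, T], continuous (fun t => complex.Re (ip (chi t) (rho t)))} /\
  exists s : seq R, forall t, 0 < t < T -> t \notin s ->
    is_derive t 1 (fun t => complex.Re (ip (chi t) (rho t)))
      (Ku P (chi t) (rho t) * (u' t - u t) + Kn1 P (chi t) (rho t) * (n1' t - n1 t)
       + Kn2 P (chi t) (rho t) * (n2' t - n2 t)).
Proof.
move=> hV [_ [chi_c [s_chi chi_d]]] [_ [rho_c [s_rho rho_d]]].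
split; first exact: continuous_Re_ip.
exists (s_chi ++ s_rho) => t tT; rewrite mem_cat negb_or => /andP[t_chi t_rho].
have chi_dt : mx_is_derive t chi (adjoint_rhs P (u t) (n1 t) (n2 t) (chi t)).
  exact: chi_d.
have rho_dt : mx_is_derive t rho (master_rhs P (u' t) (n1' t) (n2' t) (rho t)).
  exact: rho_d.
refine (is_derive_eq (is_derive_Re_ip chi_dt rho_dt) _).
by rewrite ip_adjoint_rhs // ReN addrC; exact: Re_master_rhsB.
Qed.

Lemma pairing_conserved (P : params R) (T : R) (u n1 n2 : R -> R)
    (target rho0 : M4) (chi rho : R -> M4) :
  Defs.hermitian (Vop P) -> 0 <= T ->
  adjoint_sol P T u n1 n2 target chi -> master_sol P T u n1 n2 rho0 rho ->
  complex.Re (ip (chi 0) (rho 0)) = complex.Re (ip (chi T) (rho T)).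
Proof.
move=> hV T0 adj sol; have [cont [s der]] := is_derive_pairing hV adj sol.
apply: (piecewise_derive0_eq T0 cont) => t tT ts.
refine (is_derive_eq (der t tT ts) _).
by move: (Ku _ _ _) (Kn1 _ _ _) (Kn2 _ _ _) => a b c; rewrite !subrr !mulr0 !addr0.
Qed.

Lemma J1_pairing (T : R) (target : M4) (rho : R -> M4) : density target ->
  J1 T target rho = complex.Re (ip target (rho T)).
Proof. by move=> /density_hermitian target_herm; rewrite /J1 /ip target_herm mxtrace_mulC. Qed.

End Model.

Theorem proposition1 (R : realType) (P : params R) (T mu nmax : R)
  (rho0 rhotarget : 'M[R[i]]_4)
  (uk n1k n2k uk1 n1k1 n2k1 : R -> R)
  (rhok chik rhok1 : R -> 'M[R[i]]_4) :
  params_ok P -> 0 < T -> 0 < mu -> 0 < nmax ->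
  density rho0 -> density rhotarget ->
  admissible T mu nmax uk n1k n2k ->
  master_sol P T uk n1k n2k rho0 rhok ->
  adjoint_sol P T uk n1k n2k rhotarget chik ->
  admissible T mu nmax uk1 n1k1 n2k1 ->
  master_sol P T uk1 n1k1 n2k1 rho0 rhok1 ->
  (forall t, 0 <= t <= T ->
     [/\ is_argmax (- mu) mu (fun v => Ku P (chik t) (rhok1 t) * v) (uk1 t),
         is_argmax 0 nmax (fun v => Kn1 P (chik t) (rhok1 t) * v) (n1k1 t) &
         is_argmax 0 nmax (fun v => Kn2 P (chik t) (rhok1 t) * v) (n2k1 t)]) ->
  [/\ (forall t, 0 <= t <= T ->
         0 <= Ku P (chik t) (rhok1 t) * (uk1 t - uk t)
              + Kn1 P (chik t) (rhok1 t) * (n1k1 t - n1k t)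
              + Kn2 P (chik t) (rhok1 t) * (n2k1 t - n2k t)),
      J1 T rhotarget rhok <= J1 T rhotarget rhok1 &
      (pos_lebesgue
              [set t | 0 <= t <= T /\ uk1 t != uk t /\
                       Ku P (chik t) (rhok1 t) != 0] \/
       pos_lebesgue
              [set t | 0 <= t <= T /\ n1k1 t != n1k t /\
                       Kn1 P (chik t) (rhok1 t) != 0] \/
       pos_lebesgue
              [set t | 0 <= t <= T /\ n2k1 t != n2k t /\
                       Kn2 P (chik t) (rhok1 t) != 0]) ->
      J1 T rhotarget rhok < J1 T rhotarget rhok1].
Proof.
move=> [_ [_ _ hV]] T0 _ _ _ target_dens [_ _ _ adm_k] sol_k adj_k _ sol_k1 argmax.
set g := fun t => Ku P (chik t) (rhok1 t) * (uk1 t - uk t)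
  + Kn1 P (chik t) (rhok1 t) * (n1k1 t - n1k t) + Kn2 P (chik t) (rhok1 t) * (n2k1 t - n2k t).
have gain t : 0 <= t <= T -> 0 <= g t /\
    ((uk1 t != uk t /\ Ku P (chik t) (rhok1 t) != 0) \/
     (n1k1 t != n1k t /\ Kn1 P (chik t) (rhok1 t) != 0) \/
     (n2k1 t != n2k t /\ Kn2 P (chik t) (rhok1 t) != 0) -> 0 < g t).
  move=> t_in; have [au an1 an2] := argmax t t_in; have [u_in n1_in n2_in] := adm_k t t_in.
  exact: improves3 (is_argmax_improves au u_in) (is_argmax_improves an1 n1_in)
    (is_argmax_improves an2 n2_in).
have [F_cont [s F_der]] := is_derive_pairing hV adj_k sol_k1.
set F := fun t => complex.Re (ip (chik t) (rhok1 t)) in F_cont F_der.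
have F_der_ge0 t : 0 < t < T -> t \notin s -> is_derive t 1 F (g t) /\ 0 <= g t.
  move=> tT ts; split; first exact: F_der.
  have t_in : 0 <= t <= T by case/andP: tT => /ltW -> /ltW.
  by have [] := gain t t_in.
have J_k : J1 T rhotarget rhok = F 0.
  rewrite J1_pairing // -adj_k.1 -(pairing_conserved hV (ltW T0) adj_k sol_k).
  by rewrite /F sol_k.1 sol_k1.1.
have J_k1 : J1 T rhotarget rhok1 = F T by rewrite J1_pairing // -adj_k.1.
split => [t /gain[] //||pos]; rewrite J_k J_k1.
  exact: piecewise_derive_ge0_le (ltW T0) F_cont F_der_ge0.
by case: pos => [|[]] pos; apply: (piecewise_derive_ge0_lt (ltW T0) F_cont F_der_ge0 _ pos)
  => t [t_in K]; split => //; apply: (gain t t_in).2; tauto.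
Qed.
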